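(* We may fix a basis for the matrices in $\mathcal{M}_k^j(\rho^2)$ such that $G=\Omega_j\,\mathrm{diag}\{x_1,\dots,x_k\}$, where $x_r$, $r=1,\dots,k$, are $k$-th roots of unity.
   Context: Non-singular monad matrices are $(A,B,C,D)$ with $A\in GL(k,\mathbb{C})$, $B\in Mat_{k\times k}(\mathbb{C})$, $C\in Mat_{k\times 2}(\mathbb{C})$, $D\in Mat_{2\times k}(\mathbb{C})$, satisfying $[A,B]+CD=0$ and the full-rank conditions ($\begin{pmatrix}A-y\mathbb{1}_k\\ B-x\mathbb{1}_k\\ D\end{pmatrix}$ injective and $\begin{pmatrix}x\mathbb{1}_k-B & A-y\mathbb{1}_k & C\end{pmatrix}$ surjective for all $x,y\in\mathbb{C}$), considered up to $(A,B,C,D)\sim(hAh^{-1},hBh^{-1},hC,Dh^{-1})$, $h\in GL(k,\mathbb{C})$. Here $j\in\mathbb{Z}_{2k}$ is even, and $\mathcal{M}_k^j(\rho^2)$ is the set of such matrices for which there is $G\in GL(k,\mathbb{C})$ with $e^{\imath\frac{2j\pi}{k}}A=GAG^{-1}$, $e^{\imath\frac{2\pi}{k}}B=GBG^{-1}$, $e^{\imath\frac{\pi}{k}}C=GC\,\mathrm{adj}(\sigma_{2j\pi/k})$, $e^{\imath\frac{\pi}{k}}D=\sigma_{2j\pi/k}DG^{-1}$, where $\sigma_\varphi=\mathrm{diag}(e^{-\imath\frac{3\varphi}{4}},e^{-\imath\frac{\varphi}{4}})$ and $\mathrm{adj}(\sigma)=\det(\sigma)\sigma^{-1}$. $\Omega_j=e^{\imath\frac{(2-j)\pi}{2k}}$.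 *)

From HB Require Import structures.
From mathcomp Require Import all_boot all_order all_algebra.
From mathcomp Require Import all_classical all_reals.
From mathcomp Require Import trigo.
From mathcomp Require Import complex.
Set Implicit Arguments. Unset Strict Implicit. Unset Printing Implicit Defensive.
Import Order.TTheory GRing.Theory Num.Theory.
Local Open Scope ring_scope.

Section Defs.
Variable R : realType.
Local Notation C := R[i].

Definition expi (t : R) : C := Complex (cos t) (sin t).

Definition sigma_mx (phi : R) : 'M[C]_2 :=
  diag_mx (\row_(r < 2) if (r : nat) == 0%N then expi (- (3%:R * phi / 4%:R))
                        else expi (- (phi / 4%:R))).

Definition adj2 (s : 'M[C]_2) : 'M[C]_2 := (\det s) *: invmx s.

Definition Omega (k j : nat) : C := expi ((2%:R - j%:R) * pi / (2%:R * k%:R)).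

Definition nonsingular_monad (k : nat) (A B : 'M[C]_k) (Cm : 'M[C]_(k, 2))
    (D : 'M[C]_(2, k)) : Prop :=
  [/\ A \in unitmx,
      A *m B - B *m A + Cm *m D = 0,
      (forall x y : C, forall v : 'cV[C]_k,
          col_mx (A - y%:M) (col_mx (B - x%:M) D) *m v = 0 -> v = 0) &
      (forall x y : C, forall w : 'cV[C]_k, exists u : 'cV[C]_(k + (k + 2)),
          row_mx (x%:M - B) (row_mx (A - y%:M) Cm) *m u = w)].

(* G in GL(k) realises the Z_{2k}-symmetry rho^2 (indexed by j) on (A,B,C,D) *)
Definition rho2_witness (k j : nat) (A B : 'M[C]_k) (Cm : 'M[C]_(k, 2))
    (D : 'M[C]_(2, k)) (G : 'M[C]_k) : Prop :=
  let phi := 2%:R * j%:R * pi / k%:R in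
  [/\ G \in unitmx,
      expi (2%:R * j%:R * pi / k%:R) *: A = G *m A *m invmx G,
      expi (2%:R * pi / k%:R) *: B = G *m B *m invmx G,
      expi (pi / k%:R) *: Cm = G *m Cm *m adj2 (sigma_mx phi) &
      expi (pi / k%:R) *: D = sigma_mx phi *m D *m invmx G].

Definition in_Mkj (k j : nat) (A B : 'M[C]_k) (Cm : 'M[C]_(k, 2))
    (D : 'M[C]_(2, k)) : Prop :=
  nonsingular_monad A B Cm D /\ exists G, rho2_witness j A B Cm D G.

End Defs.

(* Write G = Omega_j G'.  Raising the three twisted commutation relations to
   the k-th power kills every phase: G'^k commutes with A and B, and
   D G'^k = D.  So M = G'^k - 1 commutes with A and B and D M = 0.  On the
   column space of M, [A,B] = -CD vanishes, so if M were nonzero A and B would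
   have a common eigenvector v there, with D v = 0, contradicting the
   injectivity condition.  Hence G'^k = 1: G' is diagonalisable with k-th
   roots of unity as eigenvalues, and conjugating the monad by a
   diagonalising matrix puts G in the claimed form. *)

From HB Require Import structures.
From mathcomp Require Import all_boot all_order all_algebra all_field.
From mathcomp Require Import all_classical all_reals.
From mathcomp Require Import trigo.
From mathcomp Require Import complex.
From mathcomp.algebra_tactics Require Import ring.
Set Implicit Arguments. Unset Strict Implicit. Unset Printing Implicit Defensive.
Import Order.TTheory GRing.Theory Num.Theory.
Local Open Scope ring_scope.

Section Expi.
Variable R : realType.
Implicit Types t u : R.

Lemma expiD t u : expi (t + u) = expi t * expi u.
Proof. by rewrite /expi cosD sinD /=; congr Complex; ring. Qed.

Lemma expi0 : expi (0 : R) = 1.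
Proof. by rewrite /expi cos0 sin0. Qed.

Lemma expi_neq0 t : expi t != 0.
Proof.
apply/eqP => et0.
have := expiD t (- t); rewrite subrr expi0 et0 mul0r.
by move/eqP; rewrite oner_eq0.
Qed.

Lemma expiX t N : expi t ^+ N = expi (N%:R * t).
Proof.
elim: N => [|N IH]; first by rewrite expr0 mul0r expi0.
by rewrite exprS IH -expiD mulrSr mulrDl mul1r addrC.
Qed.

Lemma expi_2pi_periodic t N : expi (t + N%:R * (pi *+ 2)) = expi t.
Proof.
rewrite expiD -expiX.
have -> : expi (pi *+ 2 : R) = 1 by rewrite /expi cos2pi sin2pi.
by rewrite expr1n mulr1.
Qed.

Lemma expiX_eq t u (k N : nat) :
  k%:R * t = k%:R * u + N%:R * (pi *+ 2) -> expi t ^+ k = expi u ^+ k.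
Proof. by rewrite !expiX => ->; rewrite expi_2pi_periodic. Qed.

Lemma expiX_2pi_frac (k N : nat) : (0 < k)%N ->
  expi (2%:R * N%:R * pi / k%:R : R) ^+ k = 1.
Proof.
move=> k_gt0; rewrite -(expr1n R[i] k) -expi0; apply: (@expiX_eq _ _ _ N).
by rewrite mulr0 add0r mulr2n; field; rewrite pnatr_eq0 -lt0n.
Qed.

End Expi.

Section MatrixPowers.
Variable F : fieldType.

Lemma mulmx_intertwineX m n (X : 'M[F]_(m.+1, n.+1)) T G e :
  X *m G = T *m X -> X *m G ^+ e = T ^+ e *m X.
Proof.
move=> XG; elim: e => [|e IH]; first by rewrite !expr0 mulmx1 mul1mx.
by rewrite !exprSr -!mulmxE mulmxA IH -!mulmxA XG.
Qed.

Lemma diag_mxX n (d : 'rV[F]_n.+1) e :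
  diag_mx d ^+ e = diag_mx (\row_i d 0 i ^+ e).
Proof.
elim: e => [|e IH].
  by apply/matrixP => i j; rewrite !mxE.
rewrite exprSr IH -mulmxE mulmx_diag; congr diag_mx.
by apply/rowP => i; rewrite !mxE exprSr.
Qed.

Lemma skew_commX n (G A : 'M[F]_n.+1) c e :
  G *m A = c *: (A *m G) -> G ^+ e *m A = c ^+ e *: (A *m G ^+ e).
Proof.
move=> GA; elim: e => [|e IH]; first by rewrite !expr0 mulmx1 mul1mx scale1r.
rewrite exprS -mulmxE -mulmxA IH -scalemxAr mulmxA [in LHS]mulmxA GA.
by rewrite -scalemxAl scalerA -exprSr.
Qed.

End MatrixPowers.

Lemma separable_Xn_sub_1 (F : fieldType) k :
  k%:R != 0 :> F -> separable_poly ('X^k - 1 : {poly F}).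
Proof.
move=> kF0; have k_gt0 : (0 < k)%N by rewrite lt0n; apply: contraNneq kF0 => ->.
rewrite unlock derivB derivXn derivC subr0.
apply/Bezout_coprimepP; exists (-1, k%:R^-1 *: 'X) => /=.
rewrite -scaler_nat -scalerAl -scalerAr scalerA mulVf // scale1r -exprS prednK //.
by rewrite mulN1r opprB subrK eqpxx.
Qed.

Lemma expmx_eq1_diag_unity (F : closedFieldType) n k (G : 'M[F]_n.+1) :
  k%:R != 0 :> F -> G ^+ k = 1 ->
  exists2 P, P \in unitmx & exists d : 'rV[F]_n.+1,
    P *m G *m invmx P = diag_mx d /\ forall i, k.-unity_root (d 0 i).
Proof.
move=> kF0 Gk1.
have k_gt0 : (0 < k)%N by rewrite lt0n; apply: contraNneq kF0 => ->.
have [rs Xk1] := closed_field_poly_normal ('X^k - 1 : {poly F}).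
have Xk1_monic : ('X^k - 1 : {poly F}) \is monic by rewrite -polyC1 monicXnsubC.
rewrite (monicP Xk1_monic) scale1r in Xk1.
have : diagonalizable G.
  apply/diagonalizableP; exists rs.
    by rewrite -separable_prod_XsubC -Xk1 separable_Xn_sub_1.
  apply: mxminpoly_min; rewrite -Xk1 rmorphB rmorphXn /= horner_mx_X rmorph1.
  by rewrite Gk1 subrr.
move=> [P Pu /diagonalizable_forPex [d /(simmxRL Pu) PG]].
exists P => //; exists d; split => // i.
have PGd : P *m G = diag_mx d *m P by rewrite PG mulmxKV.
have := mulmx_intertwineX k PGd; rewrite Gk1 mulmx1 diag_mxX => Pdk.
have /matrixP/(_ i i) : diag_mx (\row_i d 0 i ^+ k) = 1%:M.
  by rewrite -[LHS](mulmxK Pu) -Pdk mulmxV.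
by rewrite !mxE eqxx !mulr1n unity_rootE => ->.
Qed.

Section CommonEigenvector.
Variable F : numClosedFieldType.

Lemma common_eigenvector_sub n (U A B : 'M[F]_n) :
  U != 0 -> stablemx U A -> stablemx U B -> U *m (A *m B) = U *m (B *m A) ->
  exists2 u : 'rV_n, u != 0 & [/\ (u <= U)%MS, stablemx u A & stablemx u B].
Proof.
move=> U0 UA UB U_AB; set V := row_base U.
have VA : stablemx V A by rewrite stablemx_row_base.
have VB : stablemx V B by rewrite stablemx_row_base.
have rU_gt0 : (0 < \rank U)%N by rewrite lt0n mxrank_eq0.
have V_AB : V *m (A *m B) = V *m (B *m A).
  have /submxP [X ->] : (V <= U)%MS by rewrite eq_row_base.
  by rewrite -!mulmxA U_AB.
have AB_comm : restrictmx U A *m restrictmx U B = restrictmx U B *m restrictmx U A.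
  by rewrite -!conjmxM ?inE // /conjmx V_AB.
have [v v0 /andP [vA vB]] := common_eigenvector2 rU_gt0 AB_comm.
exists (v *m V); first by rewrite mulmx_free_eq0 ?row_base_free.
by rewrite -!stablemx_restrict // vA vB (submx_trans (submxMl _ _)) ?eq_row_base.
Qed.

Lemma monad_commutant_eq0 n (A B M : 'M[F]_n) (Cm : 'M[F]_(n, 2)) (D : 'M[F]_(2, n)) :
  A *m B - B *m A + Cm *m D = 0 ->
  (forall x y : F, forall v : 'cV[F]_n,
     col_mx (A - y%:M) (col_mx (B - x%:M) D) *m v = 0 -> v = 0) ->
  M *m A = A *m M -> M *m B = B *m M -> D *m M = 0 -> M = 0.
Proof.
move=> ABCD mon_inj MA MB DM; apply/eqP; rewrite -trmx_eq0; apply/negPn/negP => M0.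
have stabA : stablemx M^T A^T by rewrite -trmx_mul -MA trmx_mul submxMl.
have stabB : stablemx M^T B^T by rewrite -trmx_mul -MB trmx_mul submxMl.
have MD : M^T *m D^T = 0 by rewrite -trmx_mul DM trmx0.
have ABt : A^T *m B^T - B^T *m A^T = D^T *m Cm^T.
  rewrite -!trmx_mul -linearB; congr trmx.
  by move/eqP: ABCD; rewrite addrC addr_eq0 opprB => /eqP.
have M_AB : M^T *m (A^T *m B^T) = M^T *m (B^T *m A^T).
  by apply/eqP; rewrite -subr_eq0 -mulmxBr ABt mulmxA MD mul0mx.
have [u u0 [uM /eigenvectorP [a /eigenspaceP uA] /eigenvectorP [b /eigenspaceP uB]]] :=
  common_eigenvector_sub M0 stabA stabB M_AB.
have uD : u *m D^T = 0 by have /submxP [X ->] := uM; rewrite -mulmxA MD mulmx0.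
suff : u^T = 0 by move/eqP; rewrite trmx_eq0 (negPf u0).
apply: (mon_inj b a); rewrite !mul_col_mx !mulmxBl !mul_scalar_mx.
rewrite -[A]trmxK -[B]trmxK -[D]trmxK -!trmx_mul uA uB uD.
by rewrite !linearZ /= !scalerN !subrr trmx0 !col_mx0.
Qed.

End CommonEigenvector.

Lemma rho2_witness_conj (R : realType) k j (A B : 'M[R[i]]_k) Cm D G h :
  h \in unitmx -> rho2_witness j A B Cm D G ->
  rho2_witness j (h *m A *m invmx h) (h *m B *m invmx h) (h *m Cm)
    (D *m invmx h) (h *m G *m invmx h).
Proof.
move=> h_unit [G_unit eA eB eC eD].
have hGh_unit : h *m G *m invmx h \in unitmx.
  by rewrite !unitmx_mul G_unit h_unit unitmx_inv h_unit.
have inv_hGh : invmx (h *m G *m invmx h) = h *m invmx G *m invmx h.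
  have hGh_inv : (h *m G *m invmx h) *m (h *m invmx G *m invmx h) = 1%:M.
    by rewrite !mulmxA mulmxKV // mulmxK // mulmxV.
  by rewrite -[LHS]mulmx1 -hGh_inv mulKmx.
split => //.
- by rewrite inv_hGh scalemxAl scalemxAr eA !mulmxA !mulmxKV.
- by rewrite inv_hGh scalemxAl scalemxAr eB !mulmxA !mulmxKV.
- by rewrite scalemxAr eC !mulmxA !mulmxKV.
- by rewrite inv_hGh scalemxAl eD !mulmxA !mulmxKV.
Qed.

Section Rho2Normalization.
Variables (R : realType) (n j : nat).
Local Notation k := n.+1.
Local Notation phi := (2%:R * j%:R * pi / k%:R : R).
Hypothesis j_even : ~~ odd j.

(* This is where Omega_j comes from: it makes both entries of
   sigma_phi / (Omega_j e^(i pi/k)) k-th roots of unity, the first one only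
   for j even. *)
Lemma sigma_mx_entryX (i : 'I_2) :
  sigma_mx phi i i ^+ k = (Omega R k j * expi (pi / k%:R)) ^+ k.
Proof.
have [m j2m] : exists m, j = (2 * m)%N.
  by exists j./2; rewrite mul2n -[LHS]odd_double_half (negbTE j_even).
rewrite !mxE eqxx mulr1n /Omega -expiD; symmetry.
case: i => [[|[|//]] _] /=.
- apply: (@expiX_eq _ _ _ _ m.+1).
  by rewrite j2m natrM -[m.+1]addn1 natrD mulr2n; field; rewrite -(natrD R 1) pnatr_eq0.
- apply: (@expiX_eq _ _ _ _ 1).
  by rewrite j2m natrM mulr2n; field; rewrite -(natrD R 1) pnatr_eq0.
Qed.

Lemma rho2_witness_normalizedX (A B : 'M[R[i]]_k) Cm D G :
  nonsingular_monad A B Cm D -> rho2_witness j A B Cm D G ->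
  ((Omega R k j)^-1 *: G) ^+ k = 1.
Proof.
move=> [_ ABCD mon_inj _] [G_unit eA eB _ eD].
set Om := Omega R k j; set Gp := Om^-1 *: G; set e := expi (pi / k%:R : R).
have GkA : G ^+ k *m A = A *m G ^+ k.
  have GA : G *m A = expi phi *: (A *m G) by rewrite scalemxAl eA mulmxKV.
  by rewrite (skew_commX _ GA) expiX_2pi_frac ?scale1r.
have GkB : G ^+ k *m B = B *m G ^+ k.
  have GB : G *m B = expi (2%:R * pi / k%:R : R) *: (B *m G).
    by rewrite scalemxAl eB mulmxKV.
  have := @expiX_2pi_frac R k 1 isT; rewrite mulr1 => B_root.
  by rewrite (skew_commX _ GB) B_root scale1r.
set t := \row_i ((Om * e)^-1 * sigma_mx phi i i).
have DGp : D *m Gp = diag_mx t *m D.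
  have sigmaD : sigma_mx phi *m D = e *: (D *m G) by rewrite scalemxAl eD mulmxKV.
  have DG : D *m G = e^-1 *: (sigma_mx phi *m D).
    by rewrite sigmaD scalerA mulVf ?scale1r ?expi_neq0.
  rewrite /Gp -scalemxAr DG scalerA /sigma_mx !mul_diag_mx.
  by apply/matrixP => a b; rewrite !mxE eqxx mulr1n invfM -[RHS]mulrA.
have t_root i : t 0 i ^+ k = 1.
  rewrite mxE exprMn sigma_mx_entryX exprVn mulVf //.
  by apply/expf_neq0/mulf_neq0; apply: expi_neq0.
clearbody t.
have DGpk : D *m Gp ^+ k = D.
  rewrite (mulmx_intertwineX _ DGp) diag_mxX -[RHS]mul1mx; congr (_ *m _).
  by apply/matrixP => a b; rewrite !mxE t_root.
have GpkE : Gp ^+ k = Om^-1 ^+ k *: G ^+ k by rewrite exprZn.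
apply/eqP; rewrite -subr_eq0; apply/eqP; apply: (monad_commutant_eq0 ABCD mon_inj).
- by rewrite mulmxBl mulmxBr mul1mx mulmx1 GpkE -scalemxAl GkA scalemxAr.
- by rewrite mulmxBl mulmxBr mul1mx mulmx1 GpkE -scalemxAl GkB scalemxAr.
- by rewrite mulmxBr DGpk mulmx1 subrr.
Qed.

End Rho2Normalization.

Theorem mainTheorem7 (R : realType) (k j : nat) (hk : (0 < k)%N)
    (hj : (j < 2 * k)%N) (hjeven : ~~ odd j)
    (A B : 'M[R[i]]_k) (Cm : 'M[R[i]]_(k, 2)) (D : 'M[R[i]]_(2, k)) :
  in_Mkj j A B Cm D ->
  exists h : 'M[R[i]]_k, h \in unitmx /\
    exists x : 'I_k -> R[i],
      (forall r, k.-unity_root (x r)) /\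
      rho2_witness j (h *m A *m invmx h) (h *m B *m invmx h) (h *m Cm)
        (D *m invmx h) (@Omega R k j *: diag_mx (\row_r x r)).
Proof.
case: k hk hj A B Cm D => [//|n] _ _ A B Cm D [monad [G G_rho2]].
have Gp_order := rho2_witness_normalizedX hjeven monad G_rho2.
have [|P P_unit [d [PGp d_root]]] := expmx_eq1_diag_unity _ Gp_order.
  by rewrite pnatr_eq0.
exists P; split => //; exists (d 0); split => //.
have -> : Omega R n.+1 j *: diag_mx (\row_r d 0 r) = P *m G *m invmx P.
  have Om0 : Omega R n.+1 j != 0 by apply: expi_neq0.
  rewrite -[G](scalerKV Om0) -scalemxAr -scalemxAl PGp; congr (_ *: diag_mx _).
  by apply/rowP => r; rewrite mxE.
exact: rho2_witness_conj.
Qed.
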